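(* Let $\xi\in(0,1)$, $C=1-\xi$, and let $\lambda(x)=\sum_{i\ge2}\lambda_ix^{i-1}$, $\rho(x)=\sum_{j\ge2}\rho_jx^{j-1}$ be degree distributions. Let $b=\int_0^1\rho(x)dx$, $R=1-\frac{\int_0^1\rho(x)dx}{\int_0^1\lambda(x)dx}$ and $\Delta R=C-R$. Then $$\int_0^1\rho(1-x)\,dx-\int_0^\xi\bigl[1-\lambda^{-1}(x/\xi)\bigr]dx=\frac{b\,\Delta R}{\xi+\Delta R},$$ where $\lambda^{-1}$ denotes the inverse function of $\lambda:[0,1]\to[0,1]$.
   Context: A degree distribution is a polynomial $\gamma(x)=\sum_{k\ge2}\gamma_kx^{k-1}$ with $\gamma_k\ge0$ and $\sum_k\gamma_k=1$; in particular $\lambda$ is strictly increasing on $[0,1]$ with $\lambda(0)=0$, $\lambda(1)=1$, so $\lambda^{-1}$ is well defined on $[0,1]$. *)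

From HB Require Import structures.
From mathcomp Require Import all_boot all_order all_algebra.
From mathcomp Require Import all_classical all_reals all_analysis.
Set Implicit Arguments. Unset Strict Implicit. Unset Printing Implicit Defensive.
Import Order.TTheory GRing.Theory Num.Theory.
Import numFieldNormedType.Exports.
Local Open Scope classical_set_scope.
Local Open Scope ring_scope.

(* A degree distribution gamma(x) = \sum_{k>=2} gamma_k x^(k-1), represented
   as a polynomial whose coefficient of x^(k-1) is gamma_k:
   constant term 0 (no k = 1 term), nonnegative coefficients, summing to 1. *)
Definition degree_distribution (R : realType) (p : {poly R}) : Prop :=
  p`_0 = 0 /\ (forall i, 0 <= p`_i) /\ \sum_(i < size p) p`_i = 1.

Definition integral_ab (R : realType) (a b : R) (f : R -> R) : R :=
  Rintegral (@lebesgue_measure R) `[a, b] f.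

(* Substituting x = xi t, the second integral is xi times the integral of
   1 - lam^-1 over [0, 1]; substituting t = lam u and integrating by parts
   against 1 - u shows that this is a := int_0^1 lam (the region between the
   graph of lam and the line y = 1, seen from the other axis).  The first
   integral is b by the symmetry x -> 1 - x.  As xi + dR = b / a, both sides
   equal b - xi a. *)

From HB Require Import structures.
From mathcomp Require Import all_boot all_order all_algebra.
From mathcomp Require Import all_classical all_reals all_analysis.
From mathcomp Require Import ring.
Set Implicit Arguments.
Unset Strict Implicit.
Unset Printing Implicit Defensive.
Import Order.TTheory GRing.Theory Num.Theory.
Import numFieldNormedType.Exports.
Local Open Scope classical_set_scope.
Local Open Scope ring_scope.

Section interval_integral.
Variable R : realType.
Notation mu := (@lebesgue_measure R).

Lemma within_continuous_integrable (g : R -> R) a b :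
  {within `[a, b], continuous g} -> mu.-integrable `[a, b] (EFin \o g).
Proof. by move=> cg; apply: continuous_compact_integrable => //; exact: segment_compact. Qed.

Lemma within_continuous_onem (A : set R) (f : R -> R) :
  {within A, continuous f} -> {within A, continuous (fun x => 1 - f x)}.
Proof. by move=> cf x; apply: cvgB; [exact: cvg_cst | exact: cf]. Qed.

Lemma derivable_oo_LRcontinuous_horner (q : {poly R}) a b :
  derivable_oo_LRcontinuous (horner q) a b.
Proof.
split; first by move=> x _; exact: derivable_horner.
- by apply: cvg_at_right_filter; exact: continuous_horner.
- by apply: cvg_at_left_filter; exact: continuous_horner.
Qed.

Lemma integral_ab_horner_substitution (q : {poly R}) (G : R -> R) :
  {in `[0, 1] &, {homo horner q : x y / x < y}} ->
  {within `[q.[0], q.[1]], continuous G} ->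
  integral_ab q.[0] q.[1] G = integral_ab 0 1 (fun u => G q.[u] * (q^`()).[u]).
Proof.
move=> q_incr cG; have cq' := @continuous_horner R q^`().
rewrite /integral_ab /Rintegral (@integration_by_substitution_increasing _ (horner q)) //.
- by congr fine; apply: eq_integral => x _; rewrite -derivE.
- by rewrite -derivE => x _; exact: cq'.
- by rewrite -derivE; apply/cvg_ex; eexists; apply: cvg_at_right_filter; exact: cq'.
- by rewrite -derivE; apply/cvg_ex; eexists; apply: cvg_at_left_filter; exact: cq'.
- exact: derivable_oo_LRcontinuous_horner.
Qed.

Lemma integral_ab_onem (G : R -> R) : {within `[0, 1], continuous G} ->
  integral_ab 0 1 (fun x => G (1 - x)) = integral_ab 0 1 G.
Proof.
move=> cG; rewrite /integral_ab (@Rintegration_by_substitution_onem _ G 1) ?ler01 ?lexx //.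
by rewrite unstable.onem1.
Qed.

Lemma integral_ab_dilate (g : R -> R) c : 0 < c ->
  {within `[0, 1], continuous g} -> {within `[0, c], continuous (fun x => g (x / c))} ->
  integral_ab 0 c (fun x => g (x / c)) = c * integral_ab 0 1 g.
Proof.
move=> c_gt0 cg cgc.
have cX_incr : {in `[0, 1] &, {homo horner (c *: 'X) : x y / x < y}}.
  by move=> x y _ _ xy; rewrite !hornerZ !hornerX ltr_pM2l.
have := integral_ab_horner_substitution cX_incr.
rewrite !hornerZ !hornerX mulr0 mulr1 => /(_ _ cgc) ->.
rewrite /integral_ab -RintegralZl //; last exact: within_continuous_integrable.
apply: eq_Rintegral => u _.
by rewrite derivZ derivX alg_polyC hornerC hornerZ hornerX [c * u]mulrC mulfK ?gt_eqF // mulrC.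
Qed.

Lemma integral_ab_exprn n : integral_ab 0 1 (fun x : R => x ^+ n) = n.+1%:R^-1.
Proof.
rewrite -integral_ab_onem; first exact: Rintegral_onemXn.
exact/continuous_subspaceT/exprn_continuous.
Qed.

End interval_integral.

Section degree_distribution.
Variable R : realType.
Implicit Types (p : {poly R}) (x : R).

Lemma degree_distribution_coef_gt0 p : degree_distribution p ->
  exists2 i : 'I_(size p), (0 < i)%N & 0 < p`_i.
Proof.
move=> [p0 [p_ge0 p_sum]].
have [/existsP[i /andP[i_gt0 pi_gt0]]|none] :=
  boolP [exists i : 'I_(size p), (0 < i)%N && (0 < p`_i)]; first by exists i.
suff : \sum_(i < size p) p`_i = 0 by rewrite p_sum => /eqP; rewrite oner_eq0.
apply: big1 => i _; have [-> //|i_gt0] := posnP i.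
apply/eqP; rewrite eq_le p_ge0 andbT leNgt; apply: contra none => pi_gt0.
by apply/existsP; exists i; rewrite i_gt0.
Qed.

Lemma horner_degree_distribution0 p : degree_distribution p -> p.[0] = 0.
Proof. by move=> [p0 _]; rewrite horner_coef0. Qed.

Lemma horner_degree_distribution1 p : degree_distribution p -> p.[1] = 1.
Proof. by move=> [_ [_ p_sum]]; rewrite horner_coef; under eq_bigr do rewrite expr1n mulr1. Qed.

Lemma horner_degree_distribution_ltr p : degree_distribution p ->
  {in `[0, +oo[ &, {homo horner p : x y / x < y}}.
Proof.
move=> dp x y; rewrite !in_itv /= !andbT => x_ge0 _ xy.
have [i i_gt0 pi_gt0] := degree_distribution_coef_gt0 dp.
have [_ [p_ge0 _]] := dp.
rewrite !horner_coef -subr_gt0 -sumrB (bigD1 i) //= -mulrBr.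
apply: ltr_pwDl; first by rewrite mulr_gt0 // subr_gt0 ltrXn2r // -lt0n.
apply: sumr_ge0 => j _; rewrite -mulrBr mulr_ge0 // subr_ge0.
by rewrite lerXn2r ?nnegrE ?(ltW xy) // (le_trans x_ge0 (ltW xy)).
Qed.

Lemma exprn_size_le_horner_degree_distribution p x : degree_distribution p ->
  0 <= x <= 1 -> x ^+ size p <= p.[x].
Proof.
move=> [_ [p_ge0 p_sum]] /andP[x_ge0 x_le1]; rewrite horner_coef.
rewrite -[leLHS]mul1r -p_sum mulr_suml; apply: ler_sum => i _.
by rewrite ler_wpM2l // ler_wiXn2l // ltnW.
Qed.

Lemma integral_ab_degree_distribution_gt0 p : degree_distribution p ->
  0 < integral_ab 0 1 (horner p).
Proof.
move=> dp; apply: (@lt_le_trans _ _ (integral_ab 0 1 (fun x => x ^+ size p))).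
  by rewrite integral_ab_exprn invr_gt0 ltr0n.
apply: le_Rintegral => //.
- exact/within_continuous_integrable/continuous_subspaceT/exprn_continuous.
- exact/within_continuous_integrable/continuous_subspaceT/continuous_horner.
- by move=> x /=; rewrite in_itv /= => x01; exact: exprn_size_le_horner_degree_distribution.
Qed.

End degree_distribution.

Section increasing_polynomial_inverse.
Variable R : realType.
Variables (p : {poly R}) (q : R -> R).
Hypothesis p_incr : {in `[0, 1] &, {homo horner p : x y / x < y}}.
Hypotheses (p0 : p.[0] = 0) (p1 : p.[1] = 1).
Hypothesis pq : forall y, 0 <= y <= 1 -> 0 <= q y <= 1 /\ p.[q y] = y.

Lemma horner_inverse_cancel : {in `[0, 1], cancel (horner p) q}.
Proof.
have p_mono := le_mono_in p_incr.
have in01 x : (x \in `[0, 1]) = (0 <= x <= 1) by rewrite in_itv.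
move=> u u01; have pu01 : 0 <= p.[u] <= 1.
  by rewrite -{1}p0 -p1 !p_mono // in01 ?lexx ?ler01 // -in01.
have [qpu01 pqpu] := pq pu01.
by apply: (inc_inj_in p_mono) => //; rewrite in01.
Qed.

Lemma continuous_dilated_inverse c : 0 < c ->
  {within `[0, c], continuous (fun x => q (x / c))}.
Proof.
move=> c_gt0.
have := @segment_can_le_continuous R 0 1 (horner (c *: p)) (fun x => q (x / c)) ler01.
rewrite !hornerZ p0 p1 mulr0 mulr1; apply.
  exact/continuous_subspaceT/continuous_horner.
by move=> u u01 /=; rewrite hornerZ mulrAC divff ?gt_eqF // mul1r horner_inverse_cancel.
Qed.

Lemma continuous_inverse : {within `[0, 1], continuous q}.
Proof.
have := continuous_dilated_inverse ltr01.
by rewrite (_ : (fun x => q (x / 1)) = q) //; apply/funext => x; rewrite divr1.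
Qed.

Lemma integral_ab_onem_inverse :
  integral_ab 0 1 (fun x => 1 - q x) = integral_ab 0 1 (horner p).
Proof.
have := integral_ab_horner_substitution p_incr.
rewrite p0 p1 /integral_ab => ->; last exact/within_continuous_onem/continuous_inverse.
under [LHS]eq_Rintegral => u.
  move=> /set_mem u01; rewrite (horner_inverse_cancel u01) (_ : 1 - u = (1 - 'X).[u]).
    over.
  by rewrite hornerD hornerN hornerC hornerX.
rewrite (Rintegration_by_parts (G := horner p) (f := horner (1 - 'X)^`()) ltr01).
- rewrite !hornerE p0 p1 derivB derivC derivX sub0r.
  under eq_Rintegral do rewrite hornerN hornerC.
  rewrite RintegralZl //; last exact/within_continuous_integrable/continuous_subspaceT/continuous_horner.
  ring.
- exact/continuous_subspaceT/continuous_horner.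
- exact: derivable_oo_LRcontinuous_horner.
- by move=> u _; rewrite -derivE.
- exact/continuous_subspaceT/continuous_horner.
- exact: derivable_oo_LRcontinuous_horner.
- by move=> u _; rewrite -derivE.
Qed.

End increasing_polynomial_inverse.

Theorem lemma1 (R : realType) (xi : R) (lam rho : {poly R})
  (lam_inv : R -> R) :
  0 < xi < 1 ->
  degree_distribution lam -> degree_distribution rho ->
  (* lam_inv is the inverse function of lam : [0,1] -> [0,1] *)
  (forall y, 0 <= y <= 1 -> 0 <= lam_inv y <= 1 /\ lam.[lam_inv y] = y) ->
  let C := 1 - xi in
  let b := integral_ab 0 1 (fun x => rho.[x]) in
  let Rr := 1 - integral_ab 0 1 (fun x => rho.[x]) /
                integral_ab 0 1 (fun x => lam.[x]) in
  let dR := C - Rr in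
  integral_ab 0 1 (fun x => rho.[1 - x])
    - integral_ab 0 xi (fun x => 1 - lam_inv (x / xi))
  = b * dR / (xi + dR).
Proof.
move=> /andP[xi_gt0 _] dlam drho lam_invK C b Rr dR.
have lam_incr : {in `[0, 1] &, {homo horner lam : x y / x < y}}.
  apply: sub_in2 (horner_degree_distribution_ltr dlam).
  by apply/subitvP; rewrite subitvE !bnd_simp.
have lam0 := horner_degree_distribution0 dlam.
have lam1 := horner_degree_distribution1 dlam.
have -> : integral_ab 0 1 (fun x => rho.[1 - x]) = b.
  exact/(integral_ab_onem (G := horner rho))/continuous_subspaceT/continuous_horner.
have -> : integral_ab 0 xi (fun x => 1 - lam_inv (x / xi)) = xi * integral_ab 0 1 (horner lam).
  rewrite (integral_ab_dilate (g := fun x => 1 - lam_inv x)) //.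
  - by rewrite (integral_ab_onem_inverse lam_incr lam0 lam1 lam_invK).
  - exact/within_continuous_onem/(continuous_inverse lam_incr lam0 lam1 lam_invK).
  - exact/within_continuous_onem/(continuous_dilated_inverse lam_incr lam0 lam1 lam_invK).
have := integral_ab_degree_distribution_gt0 dlam.
have := integral_ab_degree_distribution_gt0 drho.
rewrite /dR /Rr /C /b.
set a := integral_ab 0 1 (horner lam); set r := integral_ab 0 1 (horner rho) => r_gt0 a_gt0.
field; rewrite gt_eqF //=.
suff -> : xi * a + ((1 - xi) * a - (a - r)) = r by rewrite gt_eqF.
ring.
Qed.
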